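(* Let $S$ be a monoid and let $\mathbb{R},\mathbb{S}$ be classes of $S$-acts (each closed under isomorphic copies and containing all trivial $S$-acts). Then there exists a Kurosh–Amitsur radical $r$ with $\mathbb{R}=\mathbb{R}_r$ and $\mathbb{S}=\mathbb{S}_r$ if and only if the following four conditions hold: (1) $\mathbb{R}\cap\mathbb{S}$ consists of trivial $S$-acts; (2) $\mathbb{R}$ is closed under homomorphic images; (3) $\mathbb{S}$ is closed under taking subacts; (4) every $S$-act $A$ has an $\mathbb{R}$-system $\Sigma$ such that the Rees factor $A/\rho_\Sigma$ belongs to $\mathbb{S}$.
   Context: An $S$-act over a monoid $S$ is a set $A$ with an action $(s,a)\mapsto sa$ satisfying $s(ta)=(st)a$ and $1a=a$; homomorphisms are action-preserving maps. An $S$-act is trivial if $|A|\le 1$. A congruence on $A$ is an equivalence relation $\rho$ with $a\rho a'\Rightarrow (sa)\rho(sa')$ for all $s\in S$; $\mathrm{Con}(A)$ is the lattice of congruences, with least element $\Delta_A$ (diagonal) and greatest $\nabla_A=A\times A$. For a subact $B\le A$, $\nabla_B$ is regarded as the congruence on $A$ whose only non-singleton class is $B$. A Rees congruence is a congruence each of whose classes is either a subact or a singleton; for a congruence $\rho$, $\Sigma_\rho$ denotes the set of classes of $\rho$ that are non-trivial subacts. Every system $\Sigma$ of pairwise disjoint non-trivial subacts of $A$ determines the Rees congruence $\rho_\Sigma$: $(a,b)\in\rho_\Sigma$ iff $a,b\in B$ for some $B\in\Sigma$, or $a=b$; $A/\rho_\Sigma$ is the Rees factor. For a class $\mathbb{C}$,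 a $\mathbb{C}$-system of $A$ is a system of pairwise disjoint non-trivial subacts of $A$ each belonging to $\mathbb{C}$. A (normal) Hoehnke radical is an assignment $r$ giving each $S$-act $A$ a congruence $r(A)\in\mathrm{Con}(A)$ such that (i) for every homomorphism $f:A\to B$, $(a,a')\in r(A)$ implies $(f(a),f(a'))\in r(B)$, and (ii) $r(A/r(A))=\Delta_{A/r(A)}$. Its radical class is $\mathbb{R}_r=\{A: r(A)=\nabla_A\}$ and semisimple class is $\mathbb{S}_r=\{A: r(A)=\Delta_A\}$. A Hoehnke radical $r$ is a Kurosh–Amitsur radical if (i) $r(A)$ is a Rees congruence for every $A$; (ii) $r(B)=\nabla_B$ for every $B\in\Sigma_{r(A)}$; (iii) whenever $\Sigma$ is an $\mathbb{R}_r$-system of $A$, for every $B\in\Sigma$ there is $C\in\Sigma_{r(A)}$ with $B\le C$. *)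

From Stdlib Require Import FunctionalExtensionality PropExtensionality ProofIrrelevance.

Set Implicit Arguments.
Unset Strict Implicit.

Record monoid := Monoid {
  mcar :> Type;
  mmul : mcar -> mcar -> mcar;
  mone : mcar;
  mmulA : forall x y z, mmul x (mmul y z) = mmul (mmul x y) z;
  mmul1l : forall x, mmul mone x = x;
  mmul1r : forall x, mmul x mone = x
}.
Arguments mmul {m} x y : rename.
Arguments mone {m} : rename.

Record act (S : monoid) := Act {
  acar :> Type;
  aop : mcar S -> acar -> acar;
  aopM : forall s t a, aop s (aop t a) = aop (@mmul S s t) a;
  aop1 : forall a, aop (@mone S) a = a
}.
Arguments aop {S} A s a : rename.

Section Acts.
Variable S : monoid.

Definition is_hom (A B : act S) (f : A -> B) : Prop :=
  forall s a, f (aop A s a) = aop B s (f a).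

Definition is_iso (A B : act S) (f : A -> B) : Prop :=
  is_hom f /\ exists g : B -> A, (forall a, g (f a) = a) /\ (forall b, f (g b) = b).

Definition surjective (A B : Type) (f : A -> B) : Prop := forall b, exists a, f a = b.

Definition trivial_act (A : act S) : Prop := forall a b : A, a = b.

Definition nontrivial_set (A : Type) (B : A -> Prop) : Prop :=
  exists x y, B x /\ B y /\ x <> y.

Definition is_equiv (X : Type) (rho : X -> X -> Prop) : Prop :=
  (forall x, rho x x) /\ (forall x y, rho x y -> rho y x) /\
  (forall x y z, rho x y -> rho y z -> rho x z).

Definition is_congruence (A : act S) (rho : A -> A -> Prop) : Prop :=
  is_equiv rho /\ forall s a b, rho a b -> rho (aop A s a) (aop A s b).

Definition Delta_rel (X : Type) (rho : X -> X -> Prop) : Prop := forall x y, rho x y -> x = y.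
Definition Nabla_rel (X : Type) (rho : X -> X -> Prop) : Prop := forall x y, rho x y.

(* subacts (possibly empty subsets closed under the action) *)
Definition is_subact (A : act S) (B : A -> Prop) : Prop :=
  forall s a, B a -> B (aop A s a).

Lemma sig_eq (X : Type) (P : X -> Prop) (x y : {a : X | P a}) :
  proj1_sig x = proj1_sig y -> x = y.
Proof.
  destruct x as [x px], y as [y py]; simpl; intros ->.
  f_equal; apply proof_irrelevance.
Qed.

Definition sub_op (A : act S) (B : A -> Prop) (HB : is_subact B)
  (s : mcar S) (x : {a : A | B a}) : {a : A | B a} :=
  exist _ (aop A s (proj1_sig x)) (HB s _ (proj2_sig x)).

Definition sub_act (A : act S) (B : A -> Prop) (HB : is_subact B) : act S.
Proof.
  refine (@Act S {a : A | B a} (sub_op HB) _ _).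
  - intros s t x; apply sig_eq; simpl; apply aopM.
  - intros x; apply sig_eq; simpl; apply aop1.
Defined.

Section Quot.
Variables (A : act S) (rho : A -> A -> Prop) (Hc : is_congruence rho).

Definition qcar := {P : A -> Prop | exists a, P = rho a}.

Lemma class_act (s : mcar S) (a0 : A) :
  (fun b => exists a, rho a0 a /\ rho (aop A s a) b) = rho (aop A s a0).
Proof.
  destruct Hc as [[Hr [Hs Ht]] Hcomp].
  apply functional_extensionality; intro b; apply propositional_extensionality; split.
  - intros [a [h1 h2]]. eapply Ht; [apply Hcomp; exact h1 | exact h2].
  - intros h; exists a0; split; [apply Hr | exact h].
Qed.

Definition q_op (s : mcar S) (P : qcar) : qcar.
Proof.
  refine (exist _ (fun b => exists a, proj1_sig P a /\ rho (aop A s a) b) _).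
  destruct P as [P [a0 ->]]; simpl.
  exists (aop A s a0); apply class_act.
Defined.

Lemma q_op_val (s : mcar S) (P : qcar) (a0 : A) :
  proj1_sig P = rho a0 -> proj1_sig (q_op s P) = rho (aop A s a0).
Proof. simpl; intros ->; apply class_act. Qed.

Definition quot_act : act S.
Proof.
  refine (@Act S qcar q_op _ _).
  - intros s t P; apply sig_eq.
    destruct P as [P0 [a0 e]].
    set (P := exist (fun Q => exists a, Q = rho a) P0 (ex_intro _ a0 e)).
    assert (e' : proj1_sig P = rho a0) by exact e.
    rewrite (q_op_val s (q_op_val t e')).
    rewrite (q_op_val (@mmul S s t) e').
    rewrite aopM; reflexivity.
  - intros P; apply sig_eq.
    destruct P as [P0 [a0 e]].
    set (P := exist (fun Q => exists a, Q = rho a) P0 (ex_intro _ a0 e)).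
    assert (e' : proj1_sig P = rho a0) by exact e.
    rewrite (q_op_val (@mone S) e').
    rewrite aop1; symmetry; exact e.
Defined.
End Quot.

Definition act_class := act S -> Prop.

Definition iso_closed (C : act_class) : Prop :=
  forall (A B : act S) (f : A -> B), is_iso f -> C A -> C B.

Definition contains_trivial (C : act_class) : Prop :=
  forall A, trivial_act A -> C A.

Definition C_system (C : act_class) (A : act S) (Sigma : (A -> Prop) -> Prop) : Prop :=
  (forall B, Sigma B -> nontrivial_set B /\ exists HB : is_subact B, C (sub_act HB)) /\
  (forall B1 B2, Sigma B1 -> Sigma B2 -> (exists x, B1 x /\ B2 x) ->
     forall y, B1 y <-> B2 y).

Definition rees_rel (A : act S) (Sigma : (A -> Prop) -> Prop) (a b : A) : Prop :=
  (exists B, Sigma B /\ B a /\ B b) \/ a = b.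

Definition rad_fun := forall A : act S, A -> A -> Prop.

Definition hoehnke_radical (r : rad_fun) : Prop :=
  exists Hc : (forall A, is_congruence (r A)),
    (forall (A B : act S) (f : A -> B), is_hom f ->
        forall a a', r A a a' -> r B (f a) (f a')) /\
    (forall A, Delta_rel (r (quot_act (Hc A)))).

Definition radical_class (r : rad_fun) : act_class := fun A => Nabla_rel (r A).
Definition semisimple_class (r : rad_fun) : act_class := fun A => Delta_rel (r A).

Definition is_rees_congruence (A : act S) (rho : A -> A -> Prop) : Prop :=
  is_congruence rho /\
  forall a, is_subact (rho a) \/ (forall b, rho a b -> b = a).

Definition KA_radical (r : rad_fun) : Prop :=
  hoehnke_radical r /\
  (forall A, is_rees_congruence (r A)) /\
  (* (ii) every B in Sigma_{r(A)} (class that is a non-trivial subact) is r-radical *)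
  (forall (A : act S) (a : A) (HB : is_subact (r A a)),
      nontrivial_set (r A a) -> radical_class r (sub_act HB)) /\
  (forall (A : act S) (Sigma : (A -> Prop) -> Prop), C_system (radical_class r) Sigma ->
     forall B, Sigma B ->
       exists c : A, is_subact (r A c) /\ nontrivial_set (r A c) /\
                     (forall x, B x -> r A c x)).

End Acts.

From Stdlib Require Import FunctionalExtensionality PropExtensionality ProofIrrelevance
  Classical ClassicalEpsilon.

Set Implicit Arguments.
Unset Strict Implicit.

(* For a Kurosh–Amitsur radical r, conditions (1)–(3) come from the axioms of a
   Hoehnke radical, and the non-trivial classes of r(A) that are subacts form an
   R_r-system whose Rees congruence is r(A) itself, with factor A/r(A) in S_r.
   Conversely, let a r(A) b mean that a = b or that a and b lie in a common
   subact of A belonging to R.  If Σ is an R-system of A whose Rees factor lies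
   in S, then r(A) = ρ_Σ: the image of an R-subact of A in A/ρ_Σ is in R by (2)
   and in S by (3), hence trivial by (1), i.e. it lies in one class of ρ_Σ.
   Hence r(A) is a Rees congruence whose non-trivial classes are members of Σ,
   and the remaining axioms follow from (1)–(4). *)

Lemma rel_ext (X : Type) (rho rho' : X -> X -> Prop) :
  (forall a b, rho a b <-> rho' a b) -> rho = rho'.
Proof.
  intros E; extensionality a; extensionality b.
  apply propositional_extensionality, E.
Qed.

Section ActFacts.
Variable S : monoid.

Lemma sub_act_irr (A : act S) (B : A -> Prop) (HB HB' : is_subact B) :
  sub_act HB = sub_act HB'.
Proof. now rewrite (proof_irrelevance _ HB HB'). Qed.

Lemma quot_act_irr (A : act S) (rho : A -> A -> Prop) (Hc Hc' : is_congruence rho) :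
  quot_act Hc = quot_act Hc'.
Proof. now rewrite (proof_irrelevance _ Hc Hc'). Qed.

Lemma sub_incl_hom (A : act S) (B : A -> Prop) (HB : is_subact B) :
  is_hom (@proj1_sig A B : sub_act HB -> A).
Proof. intros s a; reflexivity. Qed.

Lemma sub_incl_surjective (A : act S) (B : A -> Prop) (HB : is_subact B) :
  (forall a, B a) -> surjective (@proj1_sig A B : sub_act HB -> A).
Proof. intros allB a; exists (exist _ a (allB a)); reflexivity. Qed.

Lemma full_subact (A : act S) : is_subact (fun _ : A => True).
Proof. intros s a _; exact I. Qed.

Lemma onto_full_subact (A : act S) :
  exists g : A -> sub_act (full_subact (A := A)), is_hom g /\ surjective g.
Proof.
  exists (fun a => exist _ a I); split.
  - intros s a; apply sig_eq; reflexivity.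
  - intros [a []]; exists a; reflexivity.
Qed.

Definition image_set (A B : act S) (f : A -> B) (C : A -> Prop) (y : B) : Prop :=
  exists c, C c /\ f c = y.

Lemma image_subact (A B : act S) (f : A -> B) (C : A -> Prop) :
  is_hom f -> is_subact C -> is_subact (image_set f C).
Proof.
  intros hf HC s y [c [Cc <-]]; exists (aop A s c); split; [apply HC, Cc | apply hf].
Qed.

Lemma onto_image_subact (A B : act S) (f : A -> B) (C : A -> Prop)
    (hf : is_hom f) (HC : is_subact C) :
  exists g : sub_act HC -> sub_act (image_subact hf HC), is_hom g /\ surjective g.
Proof.
  exists (fun x => exist (image_set f C) (f (proj1_sig x))
                    (ex_intro _ (proj1_sig x) (conj (proj2_sig x) eq_refl))).
  split.
  - intros s x; apply sig_eq, hf.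
  - intros [y [c [Cc <-]]]; exists (exist _ c Cc); apply sig_eq; reflexivity.
Qed.

Definition class_of (A : act S) (rho : A -> A -> Prop) (a : A) : qcar rho :=
  exist _ (rho a) (ex_intro _ a eq_refl).

Lemma class_of_hom (A : act S) (rho : A -> A -> Prop) (Hc : is_congruence rho) :
  @is_hom S A (quot_act Hc) (class_of rho).
Proof.
  intros s a; apply sig_eq; symmetry.
  exact (q_op_val Hc s (P := class_of rho a) eq_refl).
Qed.

Lemma quot_Delta_iso (A : act S) (rho : A -> A -> Prop) (Hc : is_congruence rho) :
  Delta_rel rho -> exists g : quot_act Hc -> A, is_iso g.
Proof.
  intros HD.
  assert (class_inj : forall x y, rho x = rho y -> x = y).
  { intros x y e; apply HD; rewrite e; apply (proj1 (proj1 Hc)). }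
  pose (g := fun P : quot_act Hc =>
          proj1_sig (constructive_indefinite_description _ (proj2_sig P))).
  assert (gP : forall P : quot_act Hc, proj1_sig P = rho (g P)).
  { intros P; exact (proj2_sig (constructive_indefinite_description _ (proj2_sig P))). }
  exists g; split.
  - intros s P; apply class_inj.
    rewrite <- gP; apply q_op_val, gP.
  - exists (class_of rho); split.
    + intros P; apply sig_eq; symmetry; apply gP.
    + intros a; apply class_inj; rewrite <- gP; reflexivity.
Qed.

Lemma rees_rel_member (C : act S -> Prop) (A : act S) (Sigma : (A -> Prop) -> Prop)
    (B : A -> Prop) (a : A) :
  C_system C Sigma -> Sigma B -> B a -> rees_rel Sigma a = B.
Proof.
  intros [_ Hdisj] SB Ba; extensionality z; apply propositional_extensionality; split.
  - intros [[B' [SB' [B'a B'z]]] | <-]; [|exact Ba].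
    exact (proj1 (Hdisj B' B SB' SB (ex_intro _ a (conj B'a Ba)) z) B'z).
  - intros Bz; left; exists B; auto.
Qed.

End ActFacts.

Section KA_conditions.
Variables (S : monoid) (r : rad_fun S).
Arguments r : clear implicits.

Lemma radical_semisimple_trivial (A : act S) :
  radical_class r A -> semisimple_class r A -> trivial_act A.
Proof. intros RA SA x y; apply SA, RA. Qed.

Hypothesis r_hoehnke : hoehnke_radical r.

Lemma radical_class_image (A B : act S) (f : A -> B) :
  is_hom f -> surjective f -> radical_class r A -> radical_class r B.
Proof.
  destruct r_hoehnke as [_ [r_hom _]].
  intros hf sf RA b b'.
  destruct (sf b) as [a <-], (sf b') as [a' <-].
  apply r_hom, RA; exact hf.
Qed.

Lemma semisimple_class_subact (A : act S) (B : A -> Prop) (HB : is_subact B) :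
  semisimple_class r A -> semisimple_class r (sub_act HB).
Proof.
  destruct r_hoehnke as [_ [r_hom _]].
  intros SA x y h; apply sig_eq, SA.
  exact (r_hom _ _ _ (sub_incl_hom (HB := HB)) x y h).
Qed.

Hypothesis r_KA : KA_radical r.

Definition radical_subact_classes (A : act S) (B : A -> Prop) : Prop :=
  exists a, B = r A a /\ is_subact (r A a) /\ nontrivial_set (r A a).
Arguments radical_subact_classes : clear implicits.

Lemma radical_subact_classes_system (A : act S) :
  C_system (radical_class r) (radical_subact_classes A).
Proof.
  destruct r_KA as [[Hc _] [_ [r_ii _]]].
  destruct (Hc A) as [[_ [Hsym Htrans]] _]; split.
  - intros B [a [-> [HB nt]]]; split; [exact nt|].
    exists HB; apply r_ii, nt.
  - intros B1 B2 [a1 [-> _]] [a2 [-> _]] [x [h1 h2]] y.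
    assert (r A a1 a2) by eauto.
    split; eauto.
Qed.

Lemma rees_radical_subact_classes (A : act S) :
  rees_rel (radical_subact_classes A) = r A.
Proof.
  destruct r_KA as [[Hc _] [r_rees _]].
  destruct (Hc A) as [[Hrefl [Hsym Htrans]] _].
  apply rel_ext; intros a b; split.
  - intros [[B [[c [-> _]] [Ba Bb]]] | <-]; eauto.
  - intros h; destruct (classic (a = b)) as [<- | nab]; [now right|].
    left; exists (r A a); repeat split; auto.
    exists a; repeat split.
    + destruct (proj2 (r_rees A) a) as [sub | single]; [exact sub|].
      now destruct nab; symmetry; apply single.
    + exists a, b; auto.
Qed.

Lemma KA_rees_system (A : act S) :
  exists Sigma : (A -> Prop) -> Prop, C_system (radical_class r) Sigma /\
    exists Hc : is_congruence (rees_rel Sigma), semisimple_class r (quot_act Hc).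
Proof.
  destruct r_KA as [[Hc [_ r_factor]] _].
  exists (radical_subact_classes A); split; [apply radical_subact_classes_system|].
  rewrite rees_radical_subact_classes; exists (Hc A); apply r_factor.
Qed.

End KA_conditions.

Section Construction.
Variables (S : monoid) (R Ss : act S -> Prop).

Definition R_radical : rad_fun S :=
  fun A a b => a = b \/ exists C (HC : is_subact C), R (sub_act HC) /\ C a /\ C b.
Arguments R_radical : clear implicits.

Hypothesis R_Ss_trivial : forall A, R A -> Ss A -> trivial_act A.
Hypothesis R_image :
  forall (A B : act S) (f : A -> B), is_hom f -> surjective f -> R A -> R B.
Hypothesis Ss_subact :
  forall (A : act S) (B : A -> Prop) (HB : is_subact B), Ss A -> Ss (sub_act HB).
Hypothesis R_rees_system : forall A : act S, exists Sigma : (A -> Prop) -> Prop,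
  C_system R Sigma /\ exists Hc : is_congruence (rees_rel Sigma), Ss (quot_act Hc).
Hypothesis R_trivial : contains_trivial R.
Hypothesis Ss_iso : iso_closed Ss.

Lemma R_subact_image (A B : act S) (f : A -> B) (C : A -> Prop) (HC : is_subact C)
    (hf : is_hom f) (RC : R (sub_act HC)) :
  exists D (HD : is_subact D), R (sub_act HD) /\ forall c, C c -> D (f c).
Proof.
  destruct (onto_image_subact hf HC) as [g [hg sg]].
  exists (image_set f C), (image_subact hf HC); split.
  - exact (R_image hg sg RC).
  - intros c Cc; exists c; auto.
Qed.

Lemma R_radical_hom (A B : act S) (f : A -> B) :
  is_hom f -> forall a a', R_radical A a a' -> R_radical B (f a) (f a').
Proof.
  intros hf a a' [<- | [C [HC [RC [Ca Ca']]]]]; [now left|].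
  destruct (R_subact_image hf RC) as [D [HD [RD CD]]].
  right; exists D, HD; auto.
Qed.

Lemma Ss_R_subact_subsingleton (X : act S) (D : X -> Prop) (HD : is_subact D) :
  Ss X -> R (sub_act HD) -> forall x y, D x -> D y -> x = y.
Proof.
  intros SX RD x y Dx Dy.
  exact (f_equal (@proj1_sig _ _)
           (R_Ss_trivial RD (Ss_subact HD SX) (exist _ x Dx) (exist _ y Dy))).
Qed.

Lemma R_radical_Delta (X : act S) : Ss X -> Delta_rel (R_radical X).
Proof.
  intros SX x y [e | [C [HC [RC [Cx Cy]]]]]; [exact e|].
  exact (Ss_R_subact_subsingleton SX RC Cx Cy).
Qed.

Lemma R_radical_eq_rees (A : act S) (Sigma : (A -> Prop) -> Prop)
    (Hc : is_congruence (rees_rel Sigma)) :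
  C_system R Sigma -> Ss (quot_act Hc) -> R_radical A = rees_rel Sigma.
Proof.
  intros HSigma SQ; apply rel_ext; intros a b; split.
  - intros [<- | [C [HC [RC [Ca Cb]]]]]; [now right|].
    destruct (R_subact_image (class_of_hom Hc) RC) as [D [HD [RD CD]]].
    assert (e := f_equal (@proj1_sig _ _)
                   (Ss_R_subact_subsingleton SQ RD (CD a Ca) (CD b Cb))).
    simpl in e; rewrite e; now right.
  - intros [[B [SB [Ba Bb]]] | <-]; [|now left].
    destruct (proj1 HSigma B SB) as [_ [HB RB]].
    right; exists B, HB; auto.
Qed.

Lemma R_radical_system (A : act S) :
  exists Sigma : (A -> Prop) -> Prop, C_system R Sigma /\ R_radical A = rees_rel Sigma.
Proof.
  destruct (R_rees_system A) as [Sigma [HSigma [Hc SQ]]].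
  exists Sigma; split; [exact HSigma|].
  exact (R_radical_eq_rees HSigma SQ).
Qed.

Lemma R_radical_congruence (A : act S) : is_congruence (R_radical A).
Proof.
  destruct (R_rees_system A) as [Sigma [HSigma [Hc SQ]]].
  now rewrite (R_radical_eq_rees HSigma SQ).
Qed.

Lemma R_radical_factor_Ss (A : act S) (Hc : is_congruence (R_radical A)) :
  Ss (quot_act Hc).
Proof.
  destruct (R_rees_system A) as [Sigma [HSigma [Hc' SQ]]].
  revert Hc; rewrite (R_radical_eq_rees HSigma SQ); intros Hc.
  now rewrite (quot_act_irr Hc Hc').
Qed.

Lemma R_radical_class_R (A : act S) (a b : A) :
  R_radical A a b -> a <> b ->
  exists HB : is_subact (R_radical A a), R (sub_act HB).
Proof.
  destruct (R_radical_system A) as [Sigma [HSigma ->]].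
  intros hab nab; destruct hab as [[B [SB [Ba _]]] | e]; [|contradiction].
  rewrite (rees_rel_member HSigma SB Ba).
  destruct (proj1 HSigma B SB) as [_ HB]; exact HB.
Qed.

Lemma R_radical_radical_class (A : act S) : R A <-> radical_class R_radical A.
Proof.
  split.
  - intros RA x y; right.
    exists (fun _ => True), (full_subact (A := A)); split; [|auto].
    destruct (onto_full_subact A) as [g [hg sg]].
    exact (R_image hg sg RA).
  - intros Nabla.
    destruct (classic (trivial_act A)) as [T | T]; [now apply R_trivial|].
    apply not_all_ex_not in T as [x T]; apply not_all_ex_not in T as [y nxy].
    destruct (R_radical_class_R (Nabla x y) nxy) as [HB RB].
    exact (R_image (sub_incl_hom (HB := HB)) (sub_incl_surjective HB (Nabla x)) RB).
Qed.

Lemma R_radical_semisimple_class (A : act S) : Ss A <-> semisimple_class R_radical A.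
Proof.
  split; [apply R_radical_Delta|].
  intros HD; destruct (quot_Delta_iso (R_radical_congruence A) HD) as [g Hg].
  exact (Ss_iso Hg (R_radical_factor_Ss _)).
Qed.

Lemma R_radical_hoehnke : hoehnke_radical R_radical.
Proof.
  exists R_radical_congruence; split; [exact R_radical_hom|].
  intros A; apply R_radical_Delta, R_radical_factor_Ss.
Qed.

Lemma R_radical_rees_congruence (A : act S) : is_rees_congruence (R_radical A).
Proof.
  split; [apply R_radical_congruence|]; intros a.
  destruct (classic (exists b, R_radical A a b /\ a <> b)) as [[b [hab nab]] | single].
  - left; destruct (R_radical_class_R hab nab) as [HB _]; exact HB.
  - right; intros b hab; apply NNPP; intros nba.
    apply single; exists b; split; auto.
Qed.

Lemma R_radical_KA : KA_radical R_radical.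
Proof.
  split; [exact R_radical_hoehnke|].
  split; [exact R_radical_rees_congruence|].
  split.
  - intros A a HB [x [y [hx [hy nxy]]]].
    assert (exists b, R_radical A a b /\ a <> b) as [b [hab nab]].
    { destruct (classic (a = x)) as [<- | nax]; eauto. }
    destruct (R_radical_class_R hab nab) as [HB' RB].
    rewrite (sub_act_irr HB HB'); now apply R_radical_radical_class.
  - intros A Sigma HSigma B SB.
    destruct (proj1 HSigma B SB) as [[x [y [Bx [By nxy]]]] [HB RB]].
    apply R_radical_radical_class in RB.
    assert (hxz : forall z, B z -> R_radical A x z) by (right; exists B, HB; auto).
    exists x; split; [|split; [|exact hxz]].
    + destruct (R_radical_class_R (hxz y By) nxy) as [HB' _]; exact HB'.
    + exists x, y; repeat split; auto; now left.
Qed.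

End Construction.

Theorem lemma2p2 (S : monoid) (R Ss : act S -> Prop) :
  iso_closed R -> iso_closed Ss -> contains_trivial R -> contains_trivial Ss ->
  ((exists r : rad_fun S, KA_radical r /\
      (forall A, R A <-> radical_class r A) /\
      (forall A, Ss A <-> semisimple_class r A))
   <->
   ((forall A, R A -> Ss A -> trivial_act A) /\
    (forall (A B : act S) (f : A -> B), is_hom f -> surjective f -> R A -> R B) /\
    (forall (A : act S) (B : A -> Prop) (HB : is_subact B), Ss A -> Ss (sub_act HB)) /\
    (forall A : act S, exists Sigma : (A -> Prop) -> Prop,
        C_system R Sigma /\
        exists Hc : is_congruence (rees_rel Sigma), Ss (quot_act Hc)))).
Proof.
  intros _ Ss_iso R_trivial _; split.
  - intros [r [r_KA [HR HS]]].
    replace R with (radical_class r)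
      by (extensionality A; symmetry; apply propositional_extensionality, HR).
    replace Ss with (semisimple_class r)
      by (extensionality A; symmetry; apply propositional_extensionality, HS).
    assert (r_hoehnke := proj1 r_KA).
    repeat split.
    + apply radical_semisimple_trivial.
    + intros A B f; now apply radical_class_image.
    + intros A B HB; now apply semisimple_class_subact.
    + now apply KA_rees_system.
  - intros [R_Ss_trivial [R_image [Ss_subact R_rees_system]]].
    exists (R_radical R); split; [|split; intros A].
    + now apply R_radical_KA with Ss.
    + now apply R_radical_radical_class with Ss.
    + now apply R_radical_semisimple_class.
Qed.
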